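(* Let $a_{12},a_{34},d>0$ with $d>\max\{a_{12},a_{34}\}$, and consider the isosceles trapezium in the Euclidean plane with vertices $A_1'=(-a_{12}/2,\,d)$, $A_2'=(a_{12}/2,\,d)$, $A_4=(-a_{34}/2,\,0)$, $A_3=(a_{34}/2,\,0)$. Let $F$ be the intersection point of the diagonals $A_1'A_3$ and $A_2'A_4$, let $\theta=\angle A_1'FA_2'$, let $F_{12}$ be the orthocenter of triangle $A_1'FA_2'$ and $F_{34}$ the orthocenter of triangle $A_4FA_3$, and set $w(\theta)=2\sin\frac{\theta}{2}$. Then $$l_{minT}:=2\,|A_1'F_{12}|+2\,|A_3F_{34}|+w(\theta)\,|F_{12}F_{34}| = 2(a_{34}+a_{12})\cos\frac{\theta}{2}.$$
   Context: $|XY|$ denotes Euclidean distance. The segment $M_{12}M_{34}$ joining the midpoints $M_{12}=(0,d)$ of $A_1'A_2'$ and $M_{34}=(0,0)$ of $A_4A_3$ is the common perpendicular of the two parallel sides, of length $d$. The points $F_{12}$ and $F_{34}$ lie on $M_{12}M_{34}$, with $\angle A_1'F_{12}A_2'=\angle A_3F_{34}A_4=180^\circ-\theta$. In the paper, $F_{12},F_{34}$ with the common weight $w(\theta)$ on the segment $F_{12}F_{34}$ (and unit weights on the four edges to the vertices) form the ''minimum construction tree'' of the trapezium. *)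

From Stdlib Require Import Reals.
Open Scope R_scope.

Definition point := (R * R)%type.

Definition edist (P Q : point) : R :=
  sqrt ((fst P - fst Q) ^ 2 + (snd P - snd Q) ^ 2).

Definition dotv (O P Q : point) : R :=
  (fst P - fst O) * (fst Q - fst O) + (snd P - snd O) * (snd Q - snd O).

Definition angle (P O Q : point) : R :=
  acos (dotv O P Q / (edist O P * edist O Q)).

Definition on_line (X P Q : point) : Prop :=
  exists t : R, X = (fst P + t * (fst Q - fst P), snd P + t * (snd Q - snd P)).

Definition is_intersection (F P1 Q1 P2 Q2 : point) : Prop :=
  on_line F P1 Q1 /\ on_line F P2 Q2.

Definition is_orthocenter (H P Q S : point) : Prop :=
  (fst H - fst P) * (fst S - fst Q) + (snd H - snd P) * (snd S - snd Q) = 0 /\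
  (fst H - fst Q) * (fst S - fst P) + (snd H - snd Q) * (snd S - snd P) = 0 /\
  (fst H - fst S) * (fst Q - fst P) + (snd H - snd S) * (snd Q - snd P) = 0.

Definition w (theta : R) : R := 2 * sin (theta / 2).

(* The two diagonals cut the trapezium into two isosceles triangles with common apex F and
   equal (vertical) apex angles theta, so both have the same half-angle tangent
   k = tan (theta/2) = (a12 + a34) / (2 d).  In an isosceles triangle of base a whose
   half apex angle has tangent k, the orthocenter lies on the axis at distance a k / 2
   from the base and at distance (a / 2) sqrt (1 + k^2) from the base vertices.  Hence
   |F12 F34| = d - (a12 + a34) k / 2 = d (1 - k^2), and with cos (theta/2) = 1 / sqrt (1 + k^2),
   sin (theta/2) = k / sqrt (1 + k^2) the identity becomes
   (a12 + a34) (1 + k^2) + 2 k d (1 - k^2) = 2 (a12 + a34), i.e. 2 k d = a12 + a34. *)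

From Stdlib Require Import Reals Lra.
Open Scope R_scope.

Lemma isosceles_trapezium_diagonals_meet (a b d : R) (F : point) :
  d <> 0 -> a + b <> 0 ->
  is_intersection F (- a / 2, d) (b / 2, 0) (a / 2, d) (- b / 2, 0) ->
  F = (0, b * d / (a + b)).
Proof.
  intros hd hab [[t ht_eq] [u hu_eq]].
  destruct F as [x y]; simpl in *.
  injection ht_eq as hx hy; injection hu_eq as hx' hy'.
  assert (htu : t = u).
  { apply (Rmult_eq_reg_r d); [lra | exact hd]. }
  subst u.
  assert (ht : t = a / (a + b)).
  { apply (Rmult_eq_reg_r (a + b)); [| exact hab]. field_simplify; lra. }
  rewrite hx, hy, ht. f_equal; field; exact hab.
Qed.

Lemma isosceles_orthocenter (a p q : R) (H : point) :
  a <> 0 -> p <> q ->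
  is_orthocenter H (- a / 2, q) (0, p) (a / 2, q) ->
  H = (0, q + (a / 2) ^ 2 / (p - q)).
Proof.
  intros ha hpq [hbase [hapex _]].
  destruct H as [x y]; simpl in *.
  assert (hx : x = 0).
  { apply (Rmult_eq_reg_r a); [lra | exact ha]. }
  subst x. f_equal.
  apply (Rplus_eq_reg_r (- q)), (Rmult_eq_reg_r (p - q)); [| lra].
  field_simplify; lra.
Qed.

Lemma atan_ge_0 (t : R) : 0 <= t -> 0 <= atan t.
Proof.
  intros [ht | <-].
  - rewrite <- atan_0. left. apply atan_increasing. exact ht.
  - rewrite atan_0. lra.
Qed.

Lemma cos_2atan (t : R) : cos (2 * atan t) = (1 - t ^ 2) / (1 + t ^ 2).
Proof.
  assert (h1 : 0 < 1 + t²) by (generalize (Rle_0_sqr t); lra).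
  assert (hr : sqrt (1 + t²) * sqrt (1 + t²) = 1 + t²) by (apply sqrt_sqrt; lra).
  assert (hr0 : sqrt (1 + t²) <> 0) by (apply Rgt_not_eq, sqrt_lt_R0; lra).
  rewrite cos_2a_cos, cos_atan.
  replace (2 * (1 / sqrt (1 + t²)) * (1 / sqrt (1 + t²)) - 1)
    with (2 / (sqrt (1 + t²) * sqrt (1 + t²)) - 1) by (field; exact hr0).
  rewrite hr. unfold Rsqr in *. field. lra.
Qed.

Lemma isosceles_apex_angle (a p q : R) :
  0 < a -> p <> q ->
  angle (- a / 2, q) (0, p) (a / 2, q) = 2 * atan (a / (2 * Rabs (p - q))).
Proof.
  intros ha hpq.
  set (t := a / (2 * Rabs (p - q))).
  assert (habs : 0 < Rabs (p - q)) by (apply Rabs_pos_lt; lra).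
  assert (ht : 0 <= t) by (left; unfold t; apply Rdiv_lt_0_compat; lra).
  assert (hbound : 0 <= 2 * atan t <= PI).
  { generalize (atan_ge_0 t ht), (atan_bound t). lra. }
  assert (hlegs : edist (0, p) (- a / 2, q) * edist (0, p) (a / 2, q)
                  = (a / 2) ^ 2 + (p - q) ^ 2).
  { unfold edist; cbn [fst snd].
    replace ((0 - - a / 2) ^ 2 + (p - q) ^ 2) with ((a / 2) ^ 2 + (p - q) ^ 2) by field.
    replace ((0 - a / 2) ^ 2 + (p - q) ^ 2) with ((a / 2) ^ 2 + (p - q) ^ 2) by field.
    apply sqrt_sqrt. nra. }
  unfold angle. rewrite hlegs, <- (acos_cos (2 * atan t) hbound), cos_2atan.
  f_equal. unfold dotv, t; cbn [fst snd].
  replace ((q - p) * (q - p)) with ((p - q) ^ 2) by ring.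
  rewrite <- (pow2_abs (p - q)). field. split; nra.
Qed.

Lemma construction_tree_length (a12 a34 d k : R) :
  0 <= a12 -> 0 <= a34 -> 0 <= d -> 0 <= k <= 1 -> 2 * d * k = a12 + a34 ->
  2 * edist (- a12 / 2, d) (0, d - a12 * k / 2) + 2 * edist (a34 / 2, 0) (0, a34 * k / 2)
    + w (2 * atan k) * edist (0, d - a12 * k / 2) (0, a34 * k / 2)
  = 2 * (a34 + a12) * cos (2 * atan k / 2).
Proof.
  intros h12 h34 hd hk hdk.
  assert (h1 : 0 < 1 + k²) by (generalize (Rle_0_sqr k); lra).
  set (r := sqrt (1 + k²)).
  assert (hr : r * r = 1 + k²) by (apply sqrt_sqrt; lra).
  assert (hr0 : 0 < r) by (apply sqrt_lt_R0; lra).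
  assert (hgap : d - a12 * k / 2 - a34 * k / 2 = d * (1 - k²)).
  { unfold Rsqr. nra. }
  assert (e12 : edist (- a12 / 2, d) (0, d - a12 * k / 2) = a12 / 2 * r).
  { unfold edist; cbn [fst snd].
    replace ((- a12 / 2 - 0) ^ 2 + (d - (d - a12 * k / 2)) ^ 2)
      with ((a12 / 2) ^ 2 * (1 + k²)) by (unfold Rsqr; field).
    rewrite sqrt_mult_alt, sqrt_pow2; [reflexivity | lra | nra]. }
  assert (e34 : edist (a34 / 2, 0) (0, a34 * k / 2) = a34 / 2 * r).
  { unfold edist; cbn [fst snd].
    replace ((a34 / 2 - 0) ^ 2 + (0 - a34 * k / 2) ^ 2)
      with ((a34 / 2) ^ 2 * (1 + k²)) by (unfold Rsqr; field).
    rewrite sqrt_mult_alt, sqrt_pow2; [reflexivity | lra | nra]. }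
  assert (e1234 : edist (0, d - a12 * k / 2) (0, a34 * k / 2) = d * (1 - k²)).
  { unfold edist; cbn [fst snd].
    replace ((0 - 0) ^ 2 + (d - a12 * k / 2 - a34 * k / 2) ^ 2)
      with ((d * (1 - k²)) ^ 2) by (rewrite hgap; ring).
    apply sqrt_pow2. unfold Rsqr. nra. }
  unfold w. replace (2 * atan k / 2) with (atan k) by field.
  rewrite e12, e34, e1234, sin_atan, cos_atan. fold r.
  apply (Rmult_eq_reg_r r); [| lra].
  field_simplify; [| lra | lra].
  unfold Rsqr in *. nra.
Qed.

Theorem proposition1 (a12 a34 d : R) (F F12 F34 : point) :
  0 < a12 -> 0 < a34 -> 0 < d -> Rmax a12 a34 < d ->
  let A1' : point := (- a12 / 2, d) in
  let A2' : point := (a12 / 2, d) in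
  let A4 : point := (- a34 / 2, 0) in
  let A3 : point := (a34 / 2, 0) in
  is_intersection F A1' A3 A2' A4 ->
  is_orthocenter F12 A1' F A2' ->
  is_orthocenter F34 A4 F A3 ->
  let theta := angle A1' F A2' in
  2 * edist A1' F12 + 2 * edist A3 F34 + w theta * edist F12 F34
    = 2 * (a34 + a12) * cos (theta / 2).
Proof.
  intros h12 h34 hd hmax A1' A2' A4 A3 hF hF12 hF34 theta.
  subst A1' A2' A4 A3 theta.
  assert (hsum : a12 + a34 < 2 * d) by (generalize (Rmax_l a12 a34), (Rmax_r a12 a34); lra).
  set (k := (a12 + a34) / (2 * d)).
  assert (hk : 0 <= k <= 1).
  { unfold k. split; [left; apply Rdiv_lt_0_compat; lra |].
    apply Rmult_le_reg_r with (2 * d); [lra |]. field_simplify; lra. }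
  assert (hdk : 2 * d * k = a12 + a34) by (unfold k; field; lra).
  apply isosceles_trapezium_diagonals_meet in hF; [| lra | lra]. subst F.
  set (f := a34 * d / (a12 + a34)) in *.
  assert (hfd : f - d = - (a12 * d / (a12 + a34))) by (unfold f; field; lra).
  assert (hf : 0 < f) by (apply Rdiv_lt_0_compat; nra).
  assert (hpos : 0 < a12 * d / (a12 + a34)) by (apply Rdiv_lt_0_compat; nra).
  apply isosceles_orthocenter in hF12; [| lra | lra]. subst F12.
  apply isosceles_orthocenter in hF34; [| lra | lra]. subst F34.
  rewrite isosceles_apex_angle by lra.
  replace (a12 / (2 * Rabs (f - d))) with k
    by (rewrite hfd, Rabs_Ropp, Rabs_pos_eq by lra; unfold k; field; lra).
  replace (d + (a12 / 2) ^ 2 / (f - d)) with (d - a12 * k / 2)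
    by (rewrite hfd; unfold k; field; lra).
  replace (0 + (a34 / 2) ^ 2 / (f - 0)) with (a34 * k / 2)
    by (unfold f, k; field; lra).
  apply construction_tree_length; lra.
Qed.
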